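(* Let $G$ be a non-amenable group and $m\in\mathbb{N}$. (i) If every $m$-generated subgroup of $G$ is amenable, then $\mathcal{T}(G)\geq m+3$. (ii) If every $m$-generated subgroup of $G$ is finite, then $\mathcal{T}(G)\geq 2m+4$.
   Context: A group $G$ admits a paradoxical decomposition if there exist positive integers $m,n$, pairwise disjoint subsets $P_1,\ldots,P_m,Q_1,\ldots,Q_n$ of $G$ and elements $g_1,\ldots,g_m,h_1,\ldots,h_n\in G$ with $G=\bigcup_iP_ig_i=\bigcup_jQ_jh_j$; this happens iff $G$ is non-amenable. The Tarski number $\mathcal{T}(G)$ is the minimal value of $m+n$. *)

From Stdlib Require Import Reals List.
Open Scope R_scope.

Record Group := {
  gcar :> Type;
  gmul : gcar -> gcar -> gcar;
  gone : gcar;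
  ginv : gcar -> gcar;
  gmulA : forall x y z, gmul x (gmul y z) = gmul (gmul x y) z;
  gmul1 : forall x, gmul gone x = x;
  gmulV : forall x, gmul (ginv x) x = gone
}.

Section Defs.
Variable G : Group.

Definition is_subgroup (H : G -> Prop) : Prop :=
  H (gone G) /\ (forall x y, H x -> H y -> H (gmul G x y)) /\
  (forall x, H x -> H (ginv G x)).

Definition generated (s : list G) : G -> Prop :=
  fun x => forall K : G -> Prop, is_subgroup K -> (forall a, In a s -> K a) -> K x.

(* H is an m-generated subgroup: generated by (at most) m elements
   (a list of length m, repetitions allowed) *)
Definition m_generated_subgroup (m : nat) (H : G -> Prop) : Prop :=
  exists s : list G, length s = m /\ forall x, H x <-> generated s x.

Definition amenable_subgroup (H : G -> Prop) : Prop :=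
  exists mu : (G -> Prop) -> R,
    (forall A, (forall x, A x -> H x) -> 0 <= mu A) /\
    mu H = 1 /\
    (forall A B, (forall x, A x -> H x) -> (forall x, B x -> H x) ->
       (forall x, A x -> B x -> False) ->
       mu (fun x => A x \/ B x) = mu A + mu B) /\
    (forall h A, H h -> (forall x, A x -> H x) ->
       mu (fun x => A (gmul G (ginv G h) x)) = mu A).

Definition amenable : Prop := amenable_subgroup (fun _ => True).

Definition finite_set (H : G -> Prop) : Prop :=
  exists l : list G, forall x, H x -> In x l.

Definition rtrans (P : G -> Prop) (g : G) : G -> Prop :=
  fun y => exists x, P x /\ y = gmul G x g.

Definition paradoxical (p q : nat) : Prop :=
  (1 <= p)%nat /\ (1 <= q)%nat /\
  exists (P Q : nat -> G -> Prop) (g h : nat -> G),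
    (forall i j x, (i < p)%nat -> (j < p)%nat -> i <> j -> P i x -> P j x -> False) /\
    (forall i j x, (i < q)%nat -> (j < q)%nat -> i <> j -> Q i x -> Q j x -> False) /\
    (forall i j x, (i < p)%nat -> (j < q)%nat -> P i x -> Q j x -> False) /\
    (forall y, exists i, (i < p)%nat /\ rtrans (P i) (g i) y) /\
    (forall y, exists j, (j < q)%nat /\ rtrans (Q j) (h j) y).

Definition is_tarski_number (t : nat) : Prop :=
  (exists p q, paradoxical p q /\ (p + q)%nat = t) /\
  (forall p q, paradoxical p q -> (t <= p + q)%nat).

End Defs.

(* Normalising a paradoxical decomposition so that g_0 = h_0 = 1, its translating
   elements g_1..g_(p-1), h_1..h_(q-1) generate a subgroup H with p + q - 2
   generators.
   (i) If p + q <= m + 2, then H is amenable.  Intersecting the pieces with H,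
   each half of the decomposition covers H, so a right-invariant mean on H gives
   each half mass at least 1, while the halves are disjoint inside a set of mass 1.
   (ii) If p <= m + 1, then H is finite.  Sending y = x g_i (x in P_i) to x is an
   injective self-map of every coset xH, hence surjective there; so the P_i
   alone cover G and no room is left for the Q_j.  Thus p, q >= m + 2. *)
From Stdlib Require Import Reals List Lia Lra FinFun.
From Stdlib Require Import Classical ClassicalEpsilon FunctionalExtensionality PropExtensionality.

Definition Un {T : Type} (n : nat) (A : nat -> T -> Prop) : T -> Prop :=
  fun x => exists i, (i < n)%nat /\ A i x.

Lemma Un_S {T : Type} n (A : nat -> T -> Prop) x : Un (S n) A x <-> Un n A x \/ A n x.
Proof.
  split.
  - intros [i [Hi Ai]]. destruct (Nat.eq_dec i n) as [->|Hin]; [now right|].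
    left. exists i. split; [lia|exact Ai].
  - intros [[i [Hi Ai]]|An]; [exists i | exists n]; split; auto.
Qed.

Lemma injective_selfmap_surjective {T : Type} (S : T -> Prop) (L : list T) (f : T -> T) :
  (forall x, S x -> In x L) -> (forall x y, f x = f y -> x = y) ->
  (forall x, S x -> S (f x)) -> forall z, S z -> exists x, S x /\ f x = z.
Proof.
  (* Otherwise a duplicate-free enumeration D of S would contain the longer
     duplicate-free list z :: map f D. *)
  intros HL finj fS z Sz. apply NNPP. intro Hz.
  pose (eq_dec := fun a b : T => excluded_middle_informative (a = b)).
  pose (inS := fun x => if excluded_middle_informative (S x) then true else false).
  pose (D := nodup eq_dec (filter inS L)).
  assert (HD : forall x, In x D <-> S x).
  { intro x. unfold D, inS. rewrite nodup_In, filter_In.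
    destruct (excluded_middle_informative (S x)) as [Sx|nSx]; split.
    - tauto.
    - intros _. split; [apply HL, Sx | reflexivity].
    - intros [_ E]. discriminate E.
    - tauto. }
  assert (ND : NoDup (z :: map f D)).
  { constructor.
    - rewrite in_map_iff. intros [x [fx Dx]]. apply Hz. exists x. split; [apply HD|]; auto.
    - apply Injective_map_NoDup; [exact finj | apply NoDup_nodup]. }
  assert (INC : incl (z :: map f D) D).
  { intros x [<-|Hx]; [now apply HD|].
    apply in_map_iff in Hx as [y [<- Dy]]. apply HD, fS, HD, Dy. }
  apply NoDup_incl_length in INC; [|exact ND]. simpl in INC. rewrite length_map in INC. lia.
Qed.

Section FinitelyAdditiveMeasure.

Context {T : Type} (H : T -> Prop) (nu : (T -> Prop) -> R).

Hypothesis nu_ge0 : forall A, (forall x, A x -> H x) -> 0 <= nu A.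
Hypothesis nu_add : forall A B, (forall x, A x -> H x) -> (forall x, B x -> H x) ->
  (forall x, A x -> B x -> False) -> nu (fun x => A x \/ B x) = nu A + nu B.

Lemma measure_ext A B : (forall x, A x <-> B x) -> nu A = nu B.
Proof.
  intro AB. f_equal. apply functional_extensionality. intro x.
  apply propositional_extensionality, AB.
Qed.

Lemma measure_le A B : (forall x, B x -> H x) -> (forall x, A x -> B x) -> nu A <= nu B.
Proof.
  intros BH AB.
  rewrite (measure_ext B (fun x => A x \/ (B x /\ ~ A x))).
  - rewrite nu_add by firstorder.
    assert (0 <= nu (fun x => B x /\ ~ A x)) by (apply nu_ge0; firstorder). lra.
  - intro x. split; [|firstorder]. intro Bx. destruct (classic (A x)); auto.
Qed.

Lemma measureU_le A B : (forall x, A x -> H x) -> (forall x, B x -> H x) ->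
  nu (fun x => A x \/ B x) <= nu A + nu B.
Proof.
  intros AH BH.
  rewrite (measure_ext (fun x => A x \/ B x) (fun x => A x \/ (B x /\ ~ A x))).
  - rewrite nu_add by firstorder.
    assert (nu (fun x => B x /\ ~ A x) <= nu B) by (apply measure_le; firstorder). lra.
  - intro x. split; [|firstorder]. intros [Ax|Bx]; auto. destruct (classic (A x)); auto.
Qed.

Lemma measure_Un_le_disjoint n (A B : nat -> T -> Prop) :
  (forall i, (i < n)%nat -> forall x, A i x -> H x) ->
  (forall i, (i < n)%nat -> forall x, B i x -> H x) ->
  (forall i j x, (i < n)%nat -> (j < n)%nat -> i <> j -> B i x -> B j x -> False) ->
  (forall i, (i < n)%nat -> nu (A i) <= nu (B i)) ->
  nu (Un n A) <= nu (Un n B).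
Proof.
  induction n as [|n IH]; intros AH BH Bdisj AB.
  - apply measure_le; intros x [i [Hi _]]; lia.
  - rewrite (measure_ext (Un (S n) A) (fun x => Un n A x \/ A n x)) by (intro; apply Un_S).
    rewrite (measure_ext (Un (S n) B) (fun x => Un n B x \/ B n x)) by (intro; apply Un_S).
    assert (UA : nu (fun x => Un n A x \/ A n x) <= nu (Un n A) + nu (A n)).
    { apply measureU_le; [intros x [i [Hi Ai]]; exact (AH i ltac:(lia) x Ai) | apply AH; lia]. }
    assert (UB : nu (fun x => Un n B x \/ B n x) = nu (Un n B) + nu (B n)).
    { apply nu_add.
      - intros x [i [Hi Bi]]. exact (BH i ltac:(lia) x Bi).
      - apply BH. lia.
      - intros x [i [Hi Bi]] Bn. apply (Bdisj i n x); auto; lia. }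
    assert (nu (Un n A) <= nu (Un n B)).
    { apply IH.
      - intros i Hi. apply AH. lia.
      - intros i Hi. apply BH. lia.
      - intros i j x Hi Hj. apply Bdisj; lia.
      - intros i Hi. apply AB. lia. }
    assert (nu (A n) <= nu (B n)) by (apply AB; lia).
    lra.
Qed.

End FinitelyAdditiveMeasure.

Section Group.

Variable G : Group.

Lemma gmulVr (x : G) : gmul G x (ginv G x) = gone G.
Proof.
  assert (idem : gmul G (gmul G x (ginv G x)) (gmul G x (ginv G x)) = gmul G x (ginv G x)).
  { rewrite <- gmulA, (gmulA G (ginv G x)), gmulV, gmul1. reflexivity. }
  rewrite <- (gmul1 G (gmul G x (ginv G x))) at 1.
  rewrite <- (gmulV G (gmul G x (ginv G x))), <- gmulA, idem. reflexivity.
Qed.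

Lemma gmul1r (x : G) : gmul G x (gone G) = x.
Proof. rewrite <- (gmulV G x), gmulA, gmulVr, gmul1. reflexivity. Qed.

Lemma gmulKr (x g : G) : gmul G (gmul G x g) (ginv G g) = x.
Proof. rewrite <- gmulA, gmulVr, gmul1r. reflexivity. Qed.

Lemma gmulVKr (x g : G) : gmul G (gmul G x (ginv G g)) g = x.
Proof. rewrite <- gmulA, gmulV, gmul1r. reflexivity. Qed.

Lemma gmulI (a b c : G) : gmul G a b = gmul G a c -> b = c.
Proof.
  intro E. rewrite <- (gmul1 G b), <- (gmul1 G c), <- (gmulV G a), <- !gmulA, E.
  reflexivity.
Qed.

Lemma ginvK (x : G) : ginv G (ginv G x) = x.
Proof. apply (gmulI (ginv G x)). rewrite gmulVr, gmulV. reflexivity. Qed.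

Lemma ginvM (x y : G) : ginv G (gmul G x y) = gmul G (ginv G y) (ginv G x).
Proof.
  apply (gmulI (gmul G x y)).
  rewrite gmulVr, <- gmulA, (gmulA G y), gmulVr, gmul1, gmulVr. reflexivity.
Qed.

Lemma generated_subgroup (s : list G) : is_subgroup G (generated G s).
Proof.
  split; [|split].
  - intros K [K1 _] _. exact K1.
  - intros x y Hx Hy K HK Hs. apply (proj1 (proj2 HK)); [exact (Hx K HK Hs)|exact (Hy K HK Hs)].
  - intros x Hx K HK Hs. apply (proj2 (proj2 HK)). exact (Hx K HK Hs).
Qed.

Lemma generated_In (s : list G) a : In a s -> generated G s a.
Proof. intros Ha K _ Hs. auto. Qed.

Definition complete_side (p : nat) (P : nat -> G -> Prop) (g : nat -> G) : Prop :=
  (forall i j x, (i < p)%nat -> (j < p)%nat -> i <> j -> P i x -> P j x -> False) /\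
  (forall y, exists i, (i < p)%nat /\ rtrans G (P i) (g i) y).

Lemma paradoxical_sides p q :
  paradoxical G p q ->
  exists P Q g h, complete_side p P g /\ complete_side q Q h /\
    (forall i j x, (i < p)%nat -> (j < q)%nat -> P i x -> Q j x -> False).
Proof.
  intros [_ [_ [P [Q [g [h [DP [DQ [DPQ [CP CQ]]]]]]]]]].
  exists P, Q, g, h. unfold complete_side. auto.
Qed.

Definition rebase (g : nat -> G) : nat -> G := fun i => gmul G (g i) (ginv G (g 0%nat)).

Lemma complete_side_rebase p P g : complete_side p P g -> complete_side p P (rebase g).
Proof.
  intros [D C]. split; [exact D|]. intro y.
  destruct (C (gmul G y (g 0%nat))) as [i [Hi [x [Px Ex]]]].
  exists i. split; [exact Hi|]. exists x. split; [exact Px|].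
  unfold rebase. rewrite gmulA, <- Ex, gmulKr. reflexivity.
Qed.

Lemma rebase_generated (g : nat -> G) (s : list G) k i :
  incl (map (rebase g) (seq 1 k)) s -> (i <= k)%nat -> generated G s (rebase g i).
Proof.
  intros Hs Hik. destruct i as [|i].
  - unfold rebase. rewrite gmulVr. apply generated_subgroup.
  - apply generated_In, Hs, in_map, in_seq. lia.
Qed.

Definition right_invariant_mean (H : G -> Prop) (nu : (G -> Prop) -> R) : Prop :=
  (forall A, (forall x, A x -> H x) -> 0 <= nu A) /\
  (forall A B, (forall x, A x -> H x) -> (forall x, B x -> H x) ->
     (forall x, A x -> B x -> False) -> nu (fun x => A x \/ B x) = nu A + nu B) /\
  nu H = 1 /\
  (forall A a, H a -> (forall x, A x -> H x) -> nu (rtrans G A a) = nu A).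

(* Pieces are translated on the right while the mean is left-invariant, so the
   mean is transported along inversion. *)
Lemma amenable_right_invariant_mean H :
  is_subgroup G H -> amenable_subgroup G H -> exists nu, right_invariant_mean H nu.
Proof.
  intros [_ [_ HV]] [mu [mu_ge0 [mu1 [mu_add mu_inv]]]].
  assert (inv_sub : forall A : G -> Prop, (forall x, A x -> H x) -> forall x, A (ginv G x) -> H x).
  { intros A AH x Ax. rewrite <- (ginvK x). apply HV, AH, Ax. }
  exists (fun A => mu (fun x => A (ginv G x))). split; [|split; [|split]].
  - intros A AH. apply mu_ge0, inv_sub, AH.
  - intros A B AH BH D. apply mu_add; [apply inv_sub, AH | apply inv_sub, BH | intro x; apply D].
  - rewrite <- mu1. apply (measure_ext mu).
    intro x. split; [apply inv_sub; auto | apply HV].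
  - intros A a Ha AH.
    rewrite <- (mu_inv (ginv G a) (fun x => A (ginv G x))) by
      (apply HV, Ha || apply inv_sub, AH).
    apply (measure_ext mu). intro x. rewrite ginvK, ginvM. split.
    + intros [y [Ay ->]]. rewrite gmulKr. exact Ay.
    + intro Ay. exists (gmul G (ginv G x) (ginv G a)). split; [exact Ay|].
      rewrite gmulVKr. reflexivity.
Qed.

Section Mean.

Variables (H : G -> Prop) (nu : (G -> Prop) -> R).
Hypothesis H_subgroup : is_subgroup G H.
Hypothesis nu_mean : right_invariant_mean H nu.

Lemma complete_side_mass p P g :
  complete_side p P g -> (forall i, (i < p)%nat -> H (g i)) ->
  1 <= nu (Un p (fun i x => P i x /\ H x)).
Proof.
  destruct H_subgroup as [_ [HM HV]]. destruct nu_mean as [nu_ge0 [nu_add [nuH nu_rtrans]]].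
  intros [D C] gH.
  assert (rtransH : forall i, (i < p)%nat -> forall y,
            rtrans G (fun x => P i x /\ H x) (g i) y -> H y).
  { intros i Hi y [x [[_ Hx] ->]]. apply HM; auto. }
  rewrite <- nuH.
  apply Rle_trans with (nu (Un p (fun i => rtrans G (fun x => P i x /\ H x) (g i)))).
  - apply (measure_le H nu nu_ge0 nu_add).
    + intros y [i [Hi Ty]]. exact (rtransH i Hi y Ty).
    + intros y Hy. destruct (C y) as [i [Hi [x [Px Ey]]]].
      exists i. split; [exact Hi|]. exists x. split; [|exact Ey]. split; [exact Px|].
      rewrite <- (gmulKr x (g i)), <- Ey. apply HM; auto.
  - apply (measure_Un_le_disjoint H nu nu_ge0 nu_add).
    + exact rtransH.
    + intros i _ x [_ Hx]. exact Hx.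
    + intros i j x Hi Hj Hij [Pi _] [Pj _]. exact (D i j x Hi Hj Hij Pi Pj).
    + intros i Hi. rewrite nu_rtrans by (auto; intros x [_ Hx]; exact Hx). lra.
Qed.

End Mean.

Lemma paradoxical_translations_not_amenable H p q P Q g h :
  is_subgroup G H -> amenable_subgroup G H ->
  (forall i, (i < p)%nat -> H (g i)) -> (forall j, (j < q)%nat -> H (h j)) ->
  complete_side p P g -> complete_side q Q h ->
  (forall i j x, (i < p)%nat -> (j < q)%nat -> P i x -> Q j x -> False) -> False.
Proof.
  intros HH Hamen gH hH SP SQ DPQ.
  destruct (amenable_right_invariant_mean H HH Hamen) as [nu Hnu].
  pose proof (complete_side_mass H nu HH Hnu p P g SP gH) as massP.
  pose proof (complete_side_mass H nu HH Hnu q Q h SQ hH) as massQ.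
  destruct Hnu as [nu_ge0 [nu_add [nuH _]]].
  set (UP := Un p (fun i x => P i x /\ H x)) in massP.
  set (UQ := Un q (fun j x => Q j x /\ H x)) in massQ.
  assert (UPH : forall x, UP x -> H x) by (intros x [i [_ [_ Hx]]]; exact Hx).
  assert (UQH : forall x, UQ x -> H x) by (intros x [j [_ [_ Hx]]]; exact Hx).
  assert (massPQ : nu (fun x => UP x \/ UQ x) = nu UP + nu UQ).
  { apply nu_add; auto. intros x [i [Hi [Px _]]] [j [Hj [Qx _]]]. exact (DPQ i j x Hi Hj Px Qx). }
  assert (nu (fun x => UP x \/ UQ x) <= nu H).
  { apply (measure_le H nu nu_ge0 nu_add); [auto | intros x [|]; auto]. }
  lra.
Qed.

Lemma complete_side_finite_covers F p P g :
  is_subgroup G F -> finite_set G F -> (forall i, (i < p)%nat -> F (g i)) ->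
  complete_side p P g -> forall x, exists i, (i < p)%nat /\ P i x.
Proof.
  intros [F1 [FM FV]] [L FL] gF [D C] x.
  destruct (choice (fun y x => exists i, (i < p)%nat /\ P i x /\ y = gmul G x (g i)))
    as [f Hf].
  { intro y. destruct (C y) as [i [Hi [x' [Px' Ey]]]]. exists x', i. auto. }
  assert (finj : forall y y', f y = f y' -> y = y').
  { intros y y' E. destruct (Hf y) as [i [Hi [Pi ->]]]. destruct (Hf y') as [j [Hj [Pj ->]]].
    rewrite E in *. destruct (Nat.eq_dec i j) as [->|Hij]; [reflexivity|].
    destruct (D i j _ Hi Hj Hij Pi Pj). }
  set (coset := fun z => exists c, F c /\ z = gmul G x c).
  assert (coset_f : forall y, coset y -> coset (f y)).
  { intros y [c [Fc ->]]. destruct (Hf (gmul G x c)) as [i [Hi [_ Ey]]].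
    exists (gmul G c (ginv G (g i))). split; [apply FM, FV, gF; assumption|].
    rewrite gmulA. rewrite Ey at 2. rewrite gmulKr. reflexivity. }
  assert (coset_fin : forall z, coset z -> In z (map (gmul G x) L)).
  { intros z [c [Fc ->]]. apply in_map, FL, Fc. }
  destruct (injective_selfmap_surjective coset _ f coset_fin finj coset_f x)
    as [y [_ <-]].
  - exists (gone G). split; [exact F1|]. rewrite gmul1r. reflexivity.
  - destruct (Hf y) as [i [Hi [Pi _]]]. exists i. auto.
Qed.

Lemma complete_side_size m p P g x0 :
  (forall H, m_generated_subgroup G m H -> finite_set G H) ->
  complete_side p P g -> (forall i, (i < p)%nat -> ~ P i x0) -> (m + 2 <= p)%nat.
Proof.
  intros Hm SP Px0. apply Nat.nlt_ge. intro Hp.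
  set (s := map (rebase g) (seq 1 m)).
  assert (Fs : finite_set G (generated G s)).
  { apply Hm. exists s. split; [|tauto]. unfold s. rewrite length_map, length_seq. reflexivity. }
  destruct (complete_side_finite_covers (generated G s) p P (rebase g)
              (generated_subgroup s) Fs) with x0 as [i [Hi Pi]].
  - intros i Hi. apply (rebase_generated g s m); [apply incl_refl | lia].
  - apply complete_side_rebase, SP.
  - exact (Px0 i Hi Pi).
Qed.

Lemma paradoxical_amenable_bound m p q :
  (forall H, m_generated_subgroup G m H -> amenable_subgroup G H) ->
  paradoxical G p q -> (m + 3 <= p + q)%nat.
Proof.
  intros Hm Hpq. pose proof Hpq as [Hp [Hq _]].
  destruct (paradoxical_sides p q Hpq) as [P [Q [g [h [SP [SQ DPQ]]]]]].
  apply Nat.nlt_ge. intro Hlt.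
  set (s := map (rebase g) (seq 1 (p - 1)) ++ map (rebase h) (seq 1 (m - (p - 1)))).
  apply (paradoxical_translations_not_amenable (generated G s) p q P Q (rebase g) (rebase h)
           (generated_subgroup s)); auto using complete_side_rebase.
  - apply Hm. exists s. split; [|tauto].
    unfold s. rewrite length_app, !length_map, !length_seq. lia.
  - intros i Hi. apply (rebase_generated g s (p - 1)); [apply incl_appl, incl_refl | lia].
  - intros j Hj. apply (rebase_generated h s (m - (p - 1))); [apply incl_appr, incl_refl | lia].
Qed.

Lemma paradoxical_finite_bound m p q :
  (forall H, m_generated_subgroup G m H -> finite_set G H) ->
  paradoxical G p q -> (2 * m + 4 <= p + q)%nat.
Proof.
  intros Hm Hpq.
  destruct (paradoxical_sides p q Hpq) as [P [Q [g [h [SP [SQ DPQ]]]]]].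
  destruct (proj2 SQ (gone G)) as [j [Hj [x0 [Qx0 _]]]].
  destruct (proj2 SP (gone G)) as [i [Hi [y0 [Py0 _]]]].
  assert (m + 2 <= p)%nat.
  { apply (complete_side_size m p P g x0 Hm SP). intros k Hk Pk. exact (DPQ k j x0 Hk Hj Pk Qx0). }
  assert (m + 2 <= q)%nat.
  { apply (complete_side_size m q Q h y0 Hm SQ). intros k Hk Qk. exact (DPQ i k y0 Hi Hk Py0 Qk). }
  lia.
Qed.

End Group.

Theorem corollary4p2 (G : Group) (m : nat) (hG : ~ amenable G) :
  ((forall H, m_generated_subgroup G m H -> amenable_subgroup G H) ->
     forall t, is_tarski_number G t -> (m + 3 <= t)%nat) /\
  ((forall H, m_generated_subgroup G m H -> finite_set G H) ->
     forall t, is_tarski_number G t -> (2 * m + 4 <= t)%nat).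
Proof.
  split; intros Hm t [[p [q [Hpq <-]]] _].
  - exact (paradoxical_amenable_bound G m p q Hm Hpq).
  - exact (paradoxical_finite_bound G m p q Hm Hpq).
Qed.
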